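(* For every set $\mathcal{E}\subseteq\Lambda_s$ of simple terms, the following are equivalent: (1) $\mathcal{E}$ is a maximal clique (with respect to the coherence relation $\frown$) having finite height; (2) there exists a $\lambda$-term $M\in\Lambda$ such that $\mathcal{E}=\mathcal{T}(M)$.
   Context: Call-by-value resource calculus. Resource values $u,v::=x\mid \lambda x.t$; simple terms $s,t::= st\mid [v_1,\dots,v_k]$ ($k\ge0$, bags are finite multisets); resource terms $e::=v\mid s$. $\Lambda_s$ is the set of simple terms, $\Lambda_r$ the set of resource terms. Height: $\mathrm{ht}(x)=0$, $\mathrm{ht}(\lambda x.t)=\mathrm{ht}(t)+1$, $\mathrm{ht}(st)=\max\{\mathrm{ht}(s),\mathrm{ht}(t)\}+1$, $\mathrm{ht}([v_1,\dots,v_k])=\max\{\mathrm{ht}(v_i)\}+1$. The height of a non-empty set of resource terms is the maximal height of its elements if it exists (the set then has finite height), and $\aleph_0$ otherwise. The coherence relation $\frown\subseteq\Lambda_r\times\Lambda_r$ is the smallest relation such that: $x\frown x$; $\lambda x.s\frown\lambda x.t$ whenever $s\frown t$; $[v_1,\dots,v_k]\frown[v_{k+1},\dots,v_n]$ whenever $v_i\frown v_j$ for all $i,j\le n$; $s_1t_1\frown s_2t_2$ whenever $s_1\frown s_2$ and $t_1\frown t_2$. A set $\mathcal{E}\subseteq\Lambda_r$ is a clique if $e\frown e'$ for all $e,e'\in\mathcal{E}$, and a clique is maximal if for every $e\in\Lambda_r$, $\mathcal{E}\cup\{e\}$ being a clique entails $e\in\mathcal{E}$. The (call-by-value) Taylor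 expansion $\mathcal{T}(M)\subseteq\Lambda_s$ of a $\lambda$-term is defined by $\mathcal{T}(x)=\{[x^n]\mid n\ge0\}$ (where $[x^n]$ is the bag with $n$ copies of $x$), $\mathcal{T}(\lambda x.N)=\{[\lambda x.t_1,\dots,\lambda x.t_n]\mid n\ge0,\ t_i\in\mathcal{T}(N)\}$, $\mathcal{T}(PQ)=\{st\mid s\in\mathcal{T}(P),t\in\mathcal{T}(Q)\}$. *)

(* Call-by-value resource calculus, de Bruijn syntax. *)
From Stdlib Require Import List Arith.
Import ListNotations.

(* lambda-terms (de Bruijn indices, so alpha-equivalence is syntactic equality) *)
Inductive lterm : Type :=
| Var : nat -> lterm
| Lam : lterm -> lterm
| App : lterm -> lterm -> lterm.

(* Bags are represented by lists (sets of terms are predicates,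
   and all notions below are invariant under permutation of bags). *)
Inductive rval : Type :=
| RVar : nat -> rval
| RLam : sterm -> rval
with sterm : Type :=
| SApp : sterm -> sterm -> sterm
| SBag : list rval -> sterm.

Definition rterm : Type := (rval + sterm)%type.

Fixpoint ht_v (v : rval) : nat :=
  match v with
  | RVar _ => 0
  | RLam t => S (ht_s t)
  end
with ht_s (s : sterm) : nat :=
  match s with
  | SApp s t => S (Nat.max (ht_s s) (ht_s t))
  | SBag l => S (fold_right (fun v m => Nat.max (ht_v v) m) 0 l)
  end.

Definition ht (e : rterm) : nat :=
  match e with inl v => ht_v v | inr s => ht_s s end.

Inductive coh_v : rval -> rval -> Prop :=
| coh_var x : coh_v (RVar x) (RVar x)
| coh_lam s t : coh_s s t -> coh_v (RLam s) (RLam t)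
with coh_s : sterm -> sterm -> Prop :=
| coh_bag l1 l2 :
    (forall u v, In u (l1 ++ l2) -> In v (l1 ++ l2) -> coh_v u v) ->
    coh_s (SBag l1) (SBag l2)
| coh_app s1 t1 s2 t2 :
    coh_s s1 s2 -> coh_s t1 t2 -> coh_s (SApp s1 t1) (SApp s2 t2).

Definition coh (e e' : rterm) : Prop :=
  match e, e' with
  | inl u, inl v => coh_v u v
  | inr s, inr t => coh_s s t
  | _, _ => False
  end.

Definition is_clique (E : rterm -> Prop) : Prop :=
  forall e e', E e -> E e' -> coh e e'.

Definition is_maximal_clique (E : rterm -> Prop) : Prop :=
  is_clique E /\
  forall e : rterm, is_clique (fun e' => E e' \/ e' = e) -> E e.

Definition as_rterms (E : sterm -> Prop) : rterm -> Prop :=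
  fun e => match e with inl _ => False | inr s => E s end.

(* finite height: the heights of the elements are bounded (so the maximum exists) *)
Definition finite_height (E : rterm -> Prop) : Prop :=
  exists n, forall e, E e -> ht e <= n.

Fixpoint taylor (M : lterm) : sterm -> Prop :=
  match M with
  | Var x => fun s => exists n, s = SBag (repeat (RVar x) n)
  | Lam N => fun s => exists l : list sterm,
               Forall (taylor N) l /\ s = SBag (map RLam l)
  | App P Q => fun s => exists s1 t1,
               s = SApp s1 t1 /\ taylor P s1 /\ taylor Q t1
  end.

From Stdlib Require Import List Arith Lia Classical FunctionalExtensionality PropExtensionality.
Import ListNotations.

(* Coherence forces all elements of a clique to share their outermost
   constructor.  Hence a maximal clique of simple terms is either the set of
   all applications [s t] with [s], [t] ranging over two maximal cliques, or
   the set of all bags over a maximal clique of values; and a maximal clique of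
   values is either a single variable or the set of all abstractions over a
   maximal clique of simple terms.  These are exactly the clauses of the Taylor
   expansion: induction on a height bound reconstructs the lambda-term, and
   induction on the lambda-term gives the converse. *)

Lemma pred_ext {A : Type} (S T : A -> Prop) : (forall x, S x <-> T x) -> S = T.
Proof.
  intros H. apply functional_extensionality. intros x.
  apply propositional_extensionality, H.
Qed.

Section Cliques.
Context {A : Type} (R : A -> A -> Prop).

Definition clique (S : A -> Prop) : Prop := forall x y, S x -> S y -> R x y.

Definition maximal_clique (S : A -> Prop) : Prop :=
  clique S /\ forall x, R x x -> (forall y, S y -> R x y) -> S x.

Lemma maximal_clique_inhabited S a : R a a -> maximal_clique S -> exists x, S x.
Proof.
  intros Ha [_ Hmax]. apply NNPP. intros Hempty.
  apply Hempty. exists a. apply Hmax; [exact Ha|].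
  intros y Hy. exfalso. apply Hempty. exists y. exact Hy.
Qed.

Lemma maximal_clique_sub_eq S C :
  maximal_clique S -> (forall x, S x -> C x) -> clique C -> S = C.
Proof.
  intros [_ Hmax] Hsub HC. apply pred_ext. intros x. split; [apply Hsub|].
  intros Hx. apply Hmax; auto.
Qed.

End Cliques.

Scheme coh_v_ind' := Induction for coh_v Sort Prop
with coh_s_ind' := Induction for coh_s Sort Prop.
Combined Scheme coh_mutind from coh_v_ind', coh_s_ind'.

Lemma coh_sym :
  (forall u v, coh_v u v -> coh_v v u) /\ (forall s t, coh_s s t -> coh_s t s).
Proof.
  apply coh_mutind; intros; constructor; auto.
  intros u v Hu Hv. apply H; rewrite in_app_iff in *; tauto.
Qed.

Lemma coh_v_sym u v : coh_v u v -> coh_v v u.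
Proof. apply coh_sym. Qed.

Lemma coh_s_sym s t : coh_s s t -> coh_s t s.
Proof. apply coh_sym. Qed.

Lemma coh_s_nil : coh_s (SBag []) (SBag []).
Proof. constructor. intros u v []. Qed.

Lemma coh_s_bag_of_clique V l1 l2 :
  clique coh_v V -> (forall v, In v (l1 ++ l2) -> V v) -> coh_s (SBag l1) (SBag l2).
Proof. intros HV Hl. constructor. intros u v Hu Hv. apply HV; auto. Qed.

Lemma maximal_sclique_inhabited E : maximal_clique coh_s E -> exists s, E s.
Proof. apply (maximal_clique_inhabited coh_s E _ coh_s_nil). Qed.

Definition app_set (P Q : sterm -> Prop) : sterm -> Prop :=
  fun s => exists a b, s = SApp a b /\ P a /\ Q b.

Definition bag_set (V : rval -> Prop) : sterm -> Prop :=
  fun s => exists l, s = SBag l /\ forall v, In v l -> V v.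

Definition lam_set (F : sterm -> Prop) : rval -> Prop :=
  fun v => exists t, v = RLam t /\ F t.

Lemma clique_app_set P Q :
  clique coh_s P -> clique coh_s Q -> clique coh_s (app_set P Q).
Proof.
  intros HP HQ s s' [a [b [-> [Ha Hb]]]] [a' [b' [-> [Ha' Hb']]]].
  constructor; auto.
Qed.

Lemma clique_bag_set V : clique coh_v V -> clique coh_s (bag_set V).
Proof.
  intros HV s s' [l [-> Hl]] [l' [-> Hl']].
  apply (coh_s_bag_of_clique V); auto.
  intros v Hv. apply in_app_iff in Hv. destruct Hv; auto.
Qed.

Lemma clique_lam_set F : clique coh_s F -> clique coh_v (lam_set F).
Proof. intros HF v v' [t [-> Ht]] [t' [-> Ht']]. constructor; auto. Qed.

Lemma clique_var x : clique coh_v (eq (RVar x)).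
Proof. intros v v' <- <-. constructor. Qed.

Lemma maximal_app_set P Q :
  maximal_clique coh_s P -> maximal_clique coh_s Q ->
  maximal_clique coh_s (app_set P Q).
Proof.
  intros HP HQ.
  destruct (maximal_sclique_inhabited P HP) as [a0 Ha0].
  destruct (maximal_sclique_inhabited Q HQ) as [b0 Hb0].
  destruct HP as [HPc HPm], HQ as [HQc HQm].
  split; [apply clique_app_set; auto|].
  intros u Huu Hu.
  assert (H0 : coh_s u (SApp a0 b0)) by (apply Hu; exists a0, b0; auto).
  inversion H0 as [|c d ? ? Hc Hd]; subst.
  inversion Huu; subst.
  exists c, d. repeat split; [apply HPm | apply HQm]; auto.
  - intros a Ha. assert (H : coh_s (SApp c d) (SApp a b0)) by (apply Hu; exists a, b0; auto).
    inversion H; auto.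
  - intros b Hb. assert (H : coh_s (SApp c d) (SApp a0 b)) by (apply Hu; exists a0, b; auto).
    inversion H; auto.
Qed.

Lemma maximal_bag_set V : maximal_clique coh_v V -> maximal_clique coh_s (bag_set V).
Proof.
  intros [HVc HVm]. split; [apply clique_bag_set; auto|].
  intros u Huu Hu.
  assert (H0 : coh_s u (SBag [])) by (apply Hu; exists []; split; [reflexivity | intros v []]).
  inversion H0 as [l ? Hl|]; subst.
  exists l. split; [reflexivity|]. intros v Hv. apply HVm.
  - inversion Huu as [? ? Hll|]; subst. apply Hll; apply in_app_iff; auto.
  - intros w Hw.
    assert (H : coh_s (SBag l) (SBag [w])).
    { apply Hu. exists [w]. split; [reflexivity|]. intros w' [<-|[]]. exact Hw. }
    inversion H as [? ? Hlw|]; subst.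
    apply Hlw; apply in_app_iff; simpl; auto.
Qed.

Lemma maximal_var_set x : maximal_clique coh_v (eq (RVar x)).
Proof.
  split; [apply clique_var|].
  intros v _ Hv. specialize (Hv (RVar x) eq_refl). inversion Hv; reflexivity.
Qed.

Lemma maximal_lam_set F : maximal_clique coh_s F -> maximal_clique coh_v (lam_set F).
Proof.
  intros HF. destruct (maximal_sclique_inhabited F HF) as [t0 Ht0].
  destruct HF as [HFc HFm]. split; [apply clique_lam_set; auto|].
  intros u Huu Hu.
  assert (H0 : coh_v u (RLam t0)) by (apply Hu; exists t0; auto).
  inversion H0 as [|s ? _]; subst.
  exists s. split; [reflexivity|]. apply HFm.
  - inversion Huu; assumption.
  - intros t Ht. assert (H : coh_v (RLam s) (RLam t)) by (apply Hu; exists t; auto).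
    inversion H; assumption.
Qed.

Lemma maximal_app_set_inv P Q :
  clique coh_s P -> clique coh_s Q -> (exists a, P a) -> (exists b, Q b) ->
  maximal_clique coh_s (app_set P Q) ->
  maximal_clique coh_s P /\ maximal_clique coh_s Q.
Proof.
  intros HP HQ [a0 Ha0] [b0 Hb0] [_ Hmax]. split; split; auto.
  - intros u Huu Hu.
    assert (H : app_set P Q (SApp u b0)).
    { apply Hmax; [constructor; auto|].
      intros s [a [b [-> [Ha Hb]]]]. constructor; auto. }
    destruct H as [a [b [Hab [Ha _]]]]. injection Hab as -> _. exact Ha.
  - intros u Huu Hu.
    assert (H : app_set P Q (SApp a0 u)).
    { apply Hmax; [constructor; auto|].
      intros s [a [b [-> [Ha Hb]]]]. constructor; auto. }
    destruct H as [a [b [Hab [_ Hb]]]]. injection Hab as _ ->. exact Hb.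
Qed.

Lemma maximal_bag_set_inv V :
  clique coh_v V -> maximal_clique coh_s (bag_set V) -> maximal_clique coh_v V.
Proof.
  intros HV [_ Hmax]. split; [exact HV|].
  intros u Huu Hu.
  assert (HVu : clique coh_v (fun v => v = u \/ V v)).
  { intros v w [->|Hv] [->|Hw]; auto. apply coh_v_sym; auto. }
  assert (H : bag_set V (SBag [u])).
  { apply Hmax.
    - apply (coh_s_bag_of_clique _ _ _ HVu). intros v [<-|[<-|[]]]; auto.
    - intros s [l [-> Hl]]. apply (coh_s_bag_of_clique _ _ _ HVu).
      intros v Hv. apply in_app_iff in Hv. destruct Hv as [[<-|[]]|Hv]; auto. }
  destruct H as [l [Hl HlV]]. injection Hl as <-. apply HlV. left; reflexivity.
Qed.

Lemma maximal_lam_set_inv F :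
  maximal_clique coh_v (lam_set F) -> maximal_clique coh_s F.
Proof.
  intros [Hcl Hmax]. split.
  - intros t t' Ht Ht'.
    assert (H : coh_v (RLam t) (RLam t')) by (apply Hcl; [exists t | exists t']; auto).
    inversion H; assumption.
  - intros u Huu Hu.
    assert (H : lam_set F (RLam u)).
    { apply Hmax; [constructor; exact Huu|].
      intros v [t [-> Ht]]. constructor. auto. }
    destruct H as [t [Ht HFt]]. injection Ht as <-. exact HFt.
Qed.

Lemma maximal_sclique_cases E :
  maximal_clique coh_s E ->
  (exists P Q, maximal_clique coh_s P /\ maximal_clique coh_s Q /\ E = app_set P Q) \/
  (exists V, maximal_clique coh_v V /\ E = bag_set V).
Proof.
  intros Hmax. pose proof (proj1 Hmax) as HE.
  destruct (maximal_sclique_inhabited E Hmax) as [[a0 b0 | l0] H0].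
  - left.
    set (P := fun a => exists b, E (SApp a b)).
    set (Q := fun b => exists a, E (SApp a b)).
    assert (HP : clique coh_s P).
    { intros a a' [b Hb] [b' Hb']. pose proof (HE _ _ Hb Hb') as H. inversion H; auto. }
    assert (HQ : clique coh_s Q).
    { intros b b' [a Ha] [a' Ha']. pose proof (HE _ _ Ha Ha') as H. inversion H; auto. }
    assert (HEPQ : E = app_set P Q).
    { apply (maximal_clique_sub_eq coh_s); auto using clique_app_set.
      intros s Hs. pose proof (HE _ _ Hs H0) as H. inversion H; subst.
      exists s1, t1. repeat split; [exists t1 | exists s1]; exact Hs. }
    rewrite HEPQ in Hmax.
    destruct (maximal_app_set_inv P Q) as [HPm HQm]; auto.
    + exists a0, b0. exact H0.
    + exists b0, a0. exact H0.
    + exists P, Q. auto.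
  - right.
    set (V := fun v => exists l, E (SBag l) /\ In v l).
    assert (HV : clique coh_v V).
    { intros v v' [l [Hl Hv]] [l' [Hl' Hv']]. pose proof (HE _ _ Hl Hl') as H.
      inversion H as [? ? Hll'|]; subst. apply Hll'; apply in_app_iff; auto. }
    assert (HEV : E = bag_set V).
    { apply (maximal_clique_sub_eq coh_s); auto using clique_bag_set.
      intros s Hs. pose proof (HE _ _ Hs H0) as H. inversion H; subst.
      exists l1. split; [reflexivity|]. intros v Hv. exists l1. auto. }
    rewrite HEV in Hmax.
    exists V. split; [apply maximal_bag_set_inv|]; auto.
Qed.

Lemma maximal_vclique_cases V :
  maximal_clique coh_v V ->
  (exists x, V = eq (RVar x)) \/
  (exists F, maximal_clique coh_s F /\ V = lam_set F).
Proof.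
  intros Hmax. pose proof (proj1 Hmax) as HV.
  destruct (maximal_clique_inhabited coh_v V (RVar 0) (coh_var 0) Hmax) as [[x | t0] H0].
  - left. exists x. apply (maximal_clique_sub_eq coh_v); auto using clique_var.
    intros v Hv. pose proof (HV _ _ Hv H0) as H. inversion H; reflexivity.
  - right.
    set (F := fun t => V (RLam t)).
    assert (HF : clique coh_s F).
    { intros t t' Ht Ht'. pose proof (HV _ _ Ht Ht') as H. inversion H; assumption. }
    assert (HVF : V = lam_set F).
    { apply (maximal_clique_sub_eq coh_v); auto using clique_lam_set.
      intros v Hv. pose proof (HV _ _ Hv H0) as H. inversion H; subst.
      exists s. auto. }
    rewrite HVF in Hmax.
    exists F. split; [apply maximal_lam_set_inv|]; auto.
Qed.

Lemma taylor_Var x : taylor (Var x) = bag_set (eq (RVar x)).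
Proof.
  apply pred_ext. intros s. split.
  - intros [n ->]. exists (repeat (RVar x) n). split; [reflexivity|].
    intros v Hv. symmetry. exact (repeat_spec _ _ _ Hv).
  - intros [l [-> Hl]]. exists (length l). f_equal.
    apply Forall_eq_repeat, Forall_forall, Hl.
Qed.

Lemma taylor_Lam N : taylor (Lam N) = bag_set (lam_set (taylor N)).
Proof.
  apply pred_ext. intros s. split.
  - intros [l [Hl ->]]. exists (map RLam l). split; [reflexivity|].
    intros v Hv. apply in_map_iff in Hv. destruct Hv as [t [<- Ht]].
    exists t. split; [reflexivity|]. rewrite Forall_forall in Hl. auto.
  - intros [l [-> Hl]]. induction l as [|v l IH].
    + exists []. auto.
    + destruct (Hl v (or_introl eq_refl)) as [t [-> Ht]].
      destruct IH as [l' [Hl' Heq]]; [intros w Hw; apply Hl; right; exact Hw|].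
      injection Heq as ->. exists (t :: l'). auto.
Qed.

Lemma taylor_maximal M : maximal_clique coh_s (taylor M).
Proof.
  induction M as [x | N IHN | P IHP Q IHQ].
  - rewrite taylor_Var. apply maximal_bag_set, maximal_var_set.
  - rewrite taylor_Lam. apply maximal_bag_set, maximal_lam_set, IHN.
  - apply maximal_app_set; assumption.
Qed.

Definition height_bounded (E : sterm -> Prop) (n : nat) : Prop :=
  forall s, E s -> ht_s s <= n.

Lemma ht_bag_le l n : (forall v, In v l -> ht_v v <= n) -> ht_s (SBag l) <= S n.
Proof.
  intros Hl. simpl. apply le_n_S. induction l as [|v l IH]; simpl; [lia|].
  apply Nat.max_lub; [apply Hl; left; reflexivity|].
  apply IH. intros w Hw. apply Hl. right. exact Hw.
Qed.

Lemma taylor_height_bounded M : exists n, height_bounded (taylor M) n.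
Proof.
  induction M as [x | N [n Hn] | P [n1 Hn1] Q [n2 Hn2]].
  - exists 1. rewrite taylor_Var. intros s [l [-> Hl]].
    apply ht_bag_le. intros v Hv. rewrite <- (Hl v Hv). simpl. lia.
  - exists (S (S n)). rewrite taylor_Lam. intros s [l [-> Hl]].
    apply ht_bag_le. intros v Hv. destruct (Hl v Hv) as [t [-> Ht]].
    simpl. apply le_n_S, Hn, Ht.
  - exists (S (Nat.max n1 n2)). intros s [a [b [-> [Ha Hb]]]].
    specialize (Hn1 a Ha). specialize (Hn2 b Hb). simpl. lia.
Qed.

Lemma height_bounded_app_set_inv P Q n :
  (exists a, P a) -> (exists b, Q b) -> height_bounded (app_set P Q) (S n) ->
  height_bounded P n /\ height_bounded Q n.
Proof.
  intros [a0 Ha0] [b0 Hb0] Hht. split.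
  - intros a Ha. assert (H : ht_s (SApp a b0) <= S n) by (apply Hht; exists a, b0; auto).
    simpl in H. lia.
  - intros b Hb. assert (H : ht_s (SApp a0 b) <= S n) by (apply Hht; exists a0, b; auto).
    simpl in H. lia.
Qed.

Lemma height_bounded_bag_lam_inv F n :
  height_bounded (bag_set (lam_set F)) (S n) -> height_bounded F n.
Proof.
  intros Hht t Ht.
  assert (H : ht_s (SBag [RLam t]) <= S n).
  { apply Hht. exists [RLam t]. split; [reflexivity|]. intros v [<-|[]]. exists t; auto. }
  simpl in H. lia.
Qed.

Lemma maximal_height_bounded_taylor n E :
  maximal_clique coh_s E -> height_bounded E n -> exists M, E = taylor M.
Proof.
  revert E. induction n as [|n IH]; intros E Hmax Hht.
  - destruct (maximal_sclique_inhabited E Hmax) as [s Hs].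
    specialize (Hht s Hs). destruct s; simpl in Hht; lia.
  - destruct (maximal_sclique_cases E Hmax) as [[P [Q [HP [HQ ->]]]] | [V [HV ->]]].
    + destruct (height_bounded_app_set_inv P Q n) as [HtP HtQ];
        auto using maximal_sclique_inhabited.
      destruct (IH P HP HtP) as [MP ->], (IH Q HQ HtQ) as [MQ ->].
      exists (App MP MQ). reflexivity.
    + destruct (maximal_vclique_cases V HV) as [[x ->] | [F [HF ->]]].
      * exists (Var x). symmetry. apply taylor_Var.
      * destruct (IH F HF (height_bounded_bag_lam_inv F n Hht)) as [N ->].
        exists (Lam N). symmetry. apply taylor_Lam.
Qed.

Lemma is_maximal_clique_as_rterms E :
  is_maximal_clique (as_rterms E) <-> maximal_clique coh_s E.
Proof.
  split.
  - intros [Hcl Hmax]. split.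
    + intros s t Hs Ht. exact (Hcl (inr s) (inr t) Hs Ht).
    + intros u Huu Hu. apply (Hmax (inr u)).
      intros e e' [He | ->] [He' | ->].
      * apply Hcl; assumption.
      * destruct e as [v | s]; [destruct He|]. apply coh_s_sym, Hu, He.
      * destruct e' as [v | s]; [destruct He'|]. apply Hu, He'.
      * exact Huu.
  - intros Hmax. split.
    + intros [v | s] [v' | t] Hs Ht; try destruct Hs; try destruct Ht.
      apply (proj1 Hmax); assumption.
    + intros [v | u] Hcl.
      * destruct (maximal_sclique_inhabited E Hmax) as [s Hs].
        exact (Hcl (inr s) (inl v) (or_introl Hs) (or_intror eq_refl)).
      * apply (proj2 Hmax).
        -- exact (Hcl (inr u) (inr u) (or_intror eq_refl) (or_intror eq_refl)).
        -- intros s Hs. exact (Hcl (inr u) (inr s) (or_intror eq_refl) (or_introl Hs)).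
Qed.

Theorem proposition3p18 (E : sterm -> Prop) :
  (is_maximal_clique (as_rterms E) /\ finite_height (as_rterms E)) <->
  (exists M : lterm, forall s : sterm, E s <-> taylor M s).
Proof.
  split.
  - intros [Hmax [n Hn]]. apply is_maximal_clique_as_rterms in Hmax.
    destruct (maximal_height_bounded_taylor n E Hmax) as [M ->].
    + intros s Hs. exact (Hn (inr s) Hs).
    + exists M. reflexivity.
  - intros [M HM]. replace E with (taylor M) by (symmetry; apply pred_ext, HM).
    split; [apply is_maximal_clique_as_rterms, taylor_maximal|].
    destruct (taylor_height_bounded M) as [n Hn].
    exists n. intros [v | s] Hs; [destruct Hs | exact (Hn s Hs)].
Qed.
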